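(* Let $\{a_k\}_{k\in\mathbb Z}$ be a sequence of real numbers with $a_k=0$ for all $k\le0$, such that $\{a_k\}_{k\ge1}\in\mathrm{GM}$ and $\lim_{k\to\infty}a_k=0$. Then $\{a_k\}_{k\in\mathbb Z}\in\overline{\mathrm{GM}}$.
   Context: A sequence $\{a_k\}_{k\ge1}$ belongs to $\mathrm{GM}$ if there exist $C>0$ and $\lambda>1$ such that for every $n\ge1$, $\sum_{k=n}^{2n}|a_k-a_{k+1}|\le\frac Cn\sum_{n/\lambda\le k\le\lambda n}|a_k|$. For a two-sided sequence $a$: $|\Delta a_k|=|a_k-a_{k+1}|$ for $k>0$, $|\Delta a_k|=|a_k-a_{k-1}|$ for $k<0$, $|\Delta a_0|=|a_0-a_1|+|a_0-a_{-1}|$; for $k\ge0$, $\widehat a_{2^k}=\sup_{2^k\le|m|<2^{k+1}}\frac1{|m|+1}|\sum_{j=0}^ma_j|$, where for $m<0$, $\sum_{j=0}^ma_j$ means $\sum_{j=m}^0a_j$; $[\cdot]$ is the floor function. The sequence $a$ belongs to $\overline{\mathrm{GM}}$ if there is $C'>0$ such that for every $n\ge0$, $\sum_{[2^{n-1}]\le|m|<2^n}|\Delta a_m|\le C'\sup_{k\in\mathbb N_0}\min(1,2^{k-n})\widehat a_{2^k}$. *)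

From HB Require Import structures.
From mathcomp Require Import all_boot all_order all_algebra.
From mathcomp Require Import all_classical all_reals all_analysis.
Set Implicit Arguments. Unset Strict Implicit. Unset Printing Implicit Defensive.
Import Order.TTheory GRing.Theory Num.Theory.
Local Open Scope ring_scope.

(* The right sum is a finite sum over 1 <= k <= truncn (lambda n) (every
   admissible k satisfies k <= lambda n). *)
Definition GM (R : realType) (b : nat -> R) : Prop :=
  exists C : R, exists lam : R, 0 < C /\ 1 < lam /\
    forall n : nat, (1 <= n)%N ->
      \sum_(n <= k < (2 * n).+1) `|b k - b k.+1|
      <= C / n%:R *
         \sum_(1 <= k < (Num.truncn (lam * n%:R)).+1
                 | (n%:R / lam <= k%:R) && (k%:R <= lam * n%:R)) `|b k|.

Definition Dabs (R : realType) (a : int -> R) (m : int) : R :=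
  if (0 < m)%R then `|a m - a (m + 1)|
  else if (m < 0)%R then `|a m - a (m - 1)|
  else `|a 0 - a 1| + `|a 0 - a (-1)|.

Definition psum (R : realType) (a : int -> R) (m : int) : R :=
  if (0 <= m)%R then \sum_(0 <= j < `|m|%N.+1) a (Posz j)
  else \sum_(0 <= j < `|m|%N.+1) a (- Posz j).

(* \hat a_{2^k} = sup_{2^k <= |m| < 2^(k+1)} |sum_{j=0}^m a_j| / (|m|+1);
   the sup is over a finite nonempty set of nonnegative numbers, hence a max. *)
Definition ahat (R : realType) (a : int -> R) (k : nat) : R :=
  \big[Num.max/0]_(2 ^ k <= j < 2 ^ k.+1)
     Num.max (`|psum a (Posz j)| / (j%:R + 1)) (`|psum a (- Posz j)| / (j%:R + 1)).

(* sum_{[2^(n-1)] <= |m| < 2^n} |Delta a_m|, written out over j = |m|: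
   the term j = 0 (only for n = 0) is |Delta a_0|, each j >= 1 contributes
   |Delta a_j| + |Delta a_{-j}|.  Note (2^n)./2 = [2^(n-1)]. *)
Definition dyadic_var (R : realType) (a : int -> R) (n : nat) : R :=
  \sum_((2 ^ n)./2 <= j < 2 ^ n)
     (if j == 0%N then Dabs a 0 else Dabs a (Posz j) + Dabs a (- Posz j)).

(* Class GM-bar for a two-sided sequence; the sup (possibly +oo) is taken in
   the extended reals. *)
Definition GMbar (R : realType) (a : int -> R) : Prop :=
  exists C' : R, 0 < C' /\
    forall n : nat,
      ((dyadic_var a n)%:E <=
       C'%:E * ereal_sup (range (fun k : nat =>
          (Num.min 1 ((2 : R) ^ (Posz k - Posz n)) * ahat a k)%:E)))%E.

From HB Require Import structures.
From mathcomp Require Import all_boot all_order all_algebra.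
From mathcomp Require Import all_classical all_reals all_analysis.
From mathcomp Require Import zify ring lra.
Set Implicit Arguments. Unset Strict Implicit. Unset Printing Implicit Defensive.
Import Order.TTheory GRing.Theory Num.Theory.
Import numFieldNormedType.Exports.
Local Open Scope classical_set_scope.
Local Open Scope ring_scope.

(* Put b_k := a_k for k >= 0 and fix n.  A bound T on the weighted averages
   ahat in the definition of GM-bar says that the partial sums of b grow at most
   like 2 T max(m, 2^n).  Averaging b over windows of length L inside the block
   [2^i, 2^(i+1)) bounds the block mass sum |b_k| by the partial sums plus L^2
   times the variation on [2^i, 3 2^i); conversely the GM condition bounds the
   variation on [2^i, 2^(i+1)] by 2^-i times the masses of the 2p+1 neighbouring
   blocks.  With L = 2^(i-s) for 2^s large compared to the GM constants, the
   normalised masses z_i satisfy z_i <= 6 2^s + Z/2 where Z = sup z, which is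
   finite because a_k -> 0.  Hence Z <= 12 2^s and the variation over the n-th
   dyadic block is O(T). *)

Lemma ler_sum_subrange (R : numDomainType) (f : nat -> R) (P : pred nat)
    (m n m' n' : nat) :
  (forall k, 0 <= f k) -> (forall k, (m <= k < n)%N -> P k -> (m' <= k < n')%N) ->
  \sum_(m <= k < n | P k) f k <= \sum_(m' <= k < n') f k.
Proof.
move=> f_ge0 sub.
rewrite (big_nat_widen _ _ (n + n')) ?leq_addr //.
rewrite (big_nat_widen m' n' (n + n')) ?leq_addl //.
rewrite (@big_nat_widenl _ _ _ m 0) // (@big_nat_widenl _ _ _ m' 0) //.
rewrite big_mkcond [X in _ <= X]big_mkcond; apply: ler_sum_nat => k /= _.
case: ifP => [/andP[/andP[Pk kn] mk]|_]; last by case: ifP.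
by have /andP[-> ->] := sub k (introT andP (conj mk kn)) Pk.
Qed.

Lemma big_nat_dyadic (V : nmodType) (F : nat -> V) (m n : nat) : (m <= n)%N ->
  \sum_(2 ^ m <= k < 2 ^ n) F k = \sum_(m <= t < n) \sum_(2 ^ t <= k < 2 ^ t.+1) F k.
Proof.
elim: n => [|n IH]; first by rewrite leqn0 => /eqP ->; rewrite !big_geq.
rewrite leq_eqVlt => /orP[/eqP ->|]; first by rewrite !big_geq.
rewrite ltnS => mn; rewrite big_nat_recr //= -IH //.
by rewrite -big_cat_nat // ?leq_exp2l.
Qed.

Lemma natr_mul_sum (R : pzRingType) (n : nat) (x : R) : n%:R * x = \sum_(0 <= i < n) x.
Proof. by rewrite sumr_const_nat subn0 mulr_natl. Qed.

Section Dyadic.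
Variable R : realType.
Implicit Types (b : nat -> R) (T : R).

Definition partial_sum b m := \sum_(i < m) b i.
Definition jump b t := `|b t - b t.+1|.
Definition dyadic_variation b i := \sum_(2 ^ i <= t < (2 * 2 ^ i).+1) jump b t.
Definition dyadic_mass b t := \sum_(2 ^ t <= k < 2 ^ t.+1) `|b k|.

Lemma jump_ge0 b t : 0 <= jump b t. Proof. exact: normr_ge0. Qed.

Lemma dyadic_variation_ge0 b i : 0 <= dyadic_variation b i.
Proof. by apply: sumr_ge0 => t _; apply: jump_ge0. Qed.

Lemma dyadic_mass_ge0 b t : 0 <= dyadic_mass b t.
Proof. by apply: sumr_ge0 => k _; apply: normr_ge0. Qed.

Lemma big_nat_partial_sum b j L :
  \sum_(j <= k < j + L) b k = partial_sum b (j + L) - partial_sum b j.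
Proof.
rewrite /partial_sum -!(big_mkord xpredT).
by rewrite (big_cat_nat (leq0n j) (leq_addr L j)) /= addrC addrK.
Qed.

Lemma partial_sumS b j : b j = partial_sum b j.+1 - partial_sum b j.
Proof. by rewrite -addn1 -big_nat_partial_sum addn1 big_nat1. Qed.

Lemma dist_le_jumps b j d : `|b j - b (j + d)%N| <= \sum_(0 <= e < d) jump b (j + e)%N.
Proof.
elim: d => [|d IH]; first by rewrite addn0 subrr normr0 big_geq.
rewrite big_nat_recr //= (le_trans (ler_distD (b (j + d)%N) _ _)) // lerD //.
by rewrite /jump addnS.
Qed.

Section PartialSumBound.
Variables (b : nat -> R) (M : R).

Lemma block_sum_abs_le K : (forall m, (m <= 2 * K)%N -> `|partial_sum b m| <= M) ->
  \sum_(K <= j < 2 * K) `|b j| <= K%:R * (2 * M).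
Proof.
move=> PM.
have -> : K%:R * (2 * M) = \sum_(K <= j < 2 * K) (2 * M).
  by rewrite sumr_const_nat mulr_natl; congr (_ *+ _); lia.
apply: ler_sum_nat => j /andP[Kj jK].
rewrite partial_sumS (le_trans (ler_normB _ _)) // mulr_natl mulr2n.
by rewrite lerD // PM //; lia.
Qed.

(* Average [b j] over the window [j, j + L): the average is controlled by the
   partial sums, the deviation from it by the jumps in the window. *)
Lemma mulr_abs_le_window j L : (forall m, (m <= j + L)%N -> `|partial_sum b m| <= M) ->
  L%:R * `|b j| <= 2 * M + L%:R * \sum_(0 <= e < L) jump b (j + e)%N.
Proof.
move=> PM; rewrite -[L%:R]ger0_norm // -normrM.
have -> : L%:R * b j = \sum_(j <= k < j + L) b k + \sum_(0 <= d < L) (b j - b (j + d)%N).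
  have -> : \sum_(j <= k < j + L) b k = \sum_(0 <= d < L) b (j + d)%N.
    by rewrite -{1}[j]add0n big_addn addKn; apply: eq_bigr => d _; rewrite addnC.
  by rewrite sumrB addrC subrK sumr_const_nat subn0 mulr_natl.
rewrite (le_trans (ler_normD _ _)) // lerD //.
  rewrite big_nat_partial_sum (le_trans (ler_normB _ _)) // mulr_natl mulr2n.
  by rewrite lerD // PM //; lia.
rewrite (le_trans (ler_norm_sum _ _ _)) // normr_nat.
rewrite natr_mul_sum; apply: ler_sum_nat => d /andP[_ dL].
rewrite (le_trans (dist_le_jumps _ _ _)) //.
by apply: ler_sum_subrange => [e|e]; [apply: jump_ge0|lia].
Qed.

Lemma block_sum_abs_le_jumps K L : (1 <= L <= K)%N ->
  (forall m, (m <= 3 * K)%N -> `|partial_sum b m| <= M) ->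
  L%:R * \sum_(K <= j < 2 * K) `|b j| <=
  K%:R * (2 * M) + L%:R * (L%:R * \sum_(K <= t < 3 * K) jump b t).
Proof.
move=> /andP[L1 LK] PM.
rewrite mulr_sumr; apply: le_trans (ler_sum_nat (G := fun j =>
  2 * M + L%:R * \sum_(0 <= e < L) jump b (j + e)%N) _) _.
  by move=> j /andP[_ jK]; apply: mulr_abs_le_window => m mjL; apply: PM; lia.
rewrite big_split /= sumr_const_nat -mulr_sumr.
have -> : (2 * K - K = K)%N by lia.
rewrite lerD //; first by rewrite [leRHS]mulr_natl.
rewrite ler_pM2l ?ltr0n // exchange_big_nat /=.
rewrite natr_mul_sum; apply: ler_sum_nat => e /andP[_ eL].
have -> : \sum_(K <= i < 2 * K) jump b (i + e)%N = \sum_(K + e <= t < 2 * K + e) jump b t.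
  by rewrite big_addn addnK.
by apply: ler_sum_subrange => [t|t]; [apply: jump_ge0|lia].
Qed.

End PartialSumBound.

Definition GM_ineq b (C lam : R) : Prop :=
  forall n : nat, (1 <= n)%N ->
    \sum_(n <= k < (2 * n).+1) `|b k - b k.+1|
    <= C / n%:R *
       \sum_(1 <= k < (Num.truncn (lam * n%:R)).+1
               | (n%:R / lam <= k%:R) && (k%:R <= lam * n%:R)) `|b k|.

Lemma dyadic_variation_le_GM b C lam p i :
  0 < C -> 1 < lam -> lam <= (2 ^ p)%:R -> GM_ineq b C lam ->
  dyadic_variation b i <= C / (2 ^ i)%:R * \sum_(i - p <= t < i + p + 1) dyadic_mass b t.
Proof.
move=> C0 lam1 lamp GMb.
have lam0 : 0 < lam by apply: lt_trans lam1.
apply: le_trans (GMb (2 ^ i)%N (expn_gt0 _ _)) _.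
rewrite ler_pM2l ?divr_gt0 ?ltr0n ?expn_gt0 // /dyadic_mass -big_nat_dyadic; last by lia.
apply: ler_sum_subrange => [k|k /andP[k_ge1 _] /andP[lo hi]]; first exact: normr_ge0.
apply/andP; split.
  have [ip|pi] := leqP i p; first by have -> : (i - p = 0)%N by lia.
  rewrite -(ler_nat R); apply: le_trans lo.
  rewrite ler_pdivlMr // (le_trans (ler_wpM2l _ lamp)) // -natrM -expnD.
  by rewrite ler_nat leq_exp2l //; lia.
have k_le : (k <= 2 ^ (i + p))%N.
  by rewrite -(ler_nat R) (le_trans hi) // expnD natrM mulrC ler_wpM2l.
by apply: (leq_ltn_trans k_le); rewrite ltn_exp2l //; lia.
Qed.

Lemma jumps_le_dyadic_variation b i :
  \sum_(2 ^ i <= t < 3 * 2 ^ i) jump b t <= dyadic_variation b i + dyadic_variation b i.+1.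
Proof.
rewrite (@big_cat_nat _ _ _ (2 * 2 ^ i)) /=; [|lia|lia].
by rewrite lerD //; apply: ler_sum_subrange => t; rewrite ?expnS; try apply: jump_ge0; lia.
Qed.

(* With truncated subtraction this is [T * max 1 (2 ^ i0 / 2 ^ i)]. *)
Definition dyadic_weight T i0 i := T * (2 ^ (i0 - i))%:R.

Lemma dyadic_weight_ge T i0 i : 0 <= T -> T <= dyadic_weight T i0 i.
Proof. by move=> T0; rewrite ler_peMr // ler1n expn_gt0. Qed.

Lemma dyadic_weight_ge0 T i0 i : 0 <= T -> 0 <= dyadic_weight T i0 i.
Proof. by move=> T0; apply: le_trans (dyadic_weight_ge _ _ T0). Qed.

Lemma dyadic_weight_at T i0 : dyadic_weight T i0 i0 = T.
Proof. by rewrite /dyadic_weight subnn mulr1. Qed.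

Lemma dyadic_weight_le T i0 j t p : 0 <= T -> (j - p <= t)%N ->
  dyadic_weight T i0 t <= (2 ^ p)%:R * dyadic_weight T i0 j.
Proof.
move=> T0 jpt; rewrite /dyadic_weight mulrCA -natrM -expnD ler_wpM2l // ler_nat.
by rewrite leq_exp2l //; lia.
Qed.

Lemma dyadic_weight_nonincr T i0 j t : 0 <= T -> (j <= t)%N ->
  dyadic_weight T i0 t <= dyadic_weight T i0 j.
Proof. by move=> T0 jt; rewrite ler_wpM2l // ler_nat leq_exp2l //; lia. Qed.

Section PartialSumGrowth.
Variables (b : nat -> R) (T : R) (i0 : nat).
Hypotheses (T_ge0 : 0 <= T)
  (partial_sum_le : forall m, `|partial_sum b m| <= T * (maxn m (2 ^ i0))%:R).

Lemma partial_sum_le_weight c i m : (0 < c)%N -> (m <= c * 2 ^ i)%N ->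
  `|partial_sum b m| <= (c * 2 ^ i)%:R * dyadic_weight T i0 i.
Proof.
move=> c0 mc; apply: le_trans (partial_sum_le m) _.
rewrite /dyadic_weight mulrCA -natrM ler_wpM2l // ler_nat geq_max.
rewrite (leq_trans mc) ?leq_pmulr ?expn_gt0 //= -mulnA -expnD.
by rewrite (leq_trans _ (leq_pmull _ c0)) // leq_exp2l //; lia.
Qed.

Lemma dyadic_mass_le s i :
  dyadic_mass b i / (2 ^ i)%:R <= 6 * (2 ^ s)%:R * dyadic_weight T i0 i
    + (dyadic_variation b i + dyadic_variation b i.+1) / (2 ^ s)%:R.
Proof.
set w := dyadic_weight T i0 i; set q : R := (2 ^ s)%:R.
set V : R := dyadic_variation b i + _.
have w0 : 0 <= w := dyadic_weight_ge0 _ _ T_ge0.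
have q0 : 0 < q by rewrite ltr0n expn_gt0.
have V0 : 0 <= V by apply: addr_ge0; apply: dyadic_variation_ge0.
have K0 : 0 < ((2 ^ i)%:R : R) by rewrite ltr0n expn_gt0.
rewrite /dyadic_mass expnS ler_pdivrMr //.
have [si|lt_is] := leqP s i.
  pose L := (2 ^ (i - s))%N.
  have KL : (2 ^ i = L * 2 ^ s)%N by rewrite /L -expnD subnK.
  have L_range : (1 <= L <= 2 ^ i)%N by rewrite /L expn_gt0 leq_exp2l //; lia.
  have := block_sum_abs_le_jumps L_range (fun m => partial_sum_le_weight (c := 3) isT).
  have := jumps_le_dyadic_variation b i; rewrite -/V KL !natrM -/q -/w.
  set Y := \sum_(_ <= _ < _) _; set V' := \sum_(_ <= _ < _) _.
  have l0 : 0 < (L%:R : R) by rewrite ltr0n expn_gt0.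
  move: (L%:R : R) l0 => l l0 V'V hY.
  have := ler_wpM2l (mulr_ge0 (ltW l0) (ltW l0)) V'V.
  rewrite -(ler_pM2l l0); have -> : (6 * q * w + V / q) * (l * q) = 6 * l * q * q * w + l * V.
    by field; rewrite gt_eqF.
  by nra.
have := block_sum_abs_le (K := 2 ^ i) (fun m => partial_sum_le_weight (c := 2) isT).
have qK : (2 ^ i)%:R <= q by rewrite ler_nat leq_exp2l // ltnW.
move: K0 qK; rewrite !natrM -/w; set Y : R := \sum_(_ <= _ < _) _.
set K : R := (2 ^ i)%:R => K0 qK hY.
have : 0 <= (q - K) * w * K by rewrite !mulr_ge0 ?subr_ge0 // ltW.
have : 0 <= V / q * K by rewrite !mulr_ge0 ?invr_ge0 // ltW.
have : 0 <= K * K * w by rewrite !mulr_ge0 // ltW.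
by nra.
Qed.

End PartialSumGrowth.

Section Absorption.
Variables (b : nat -> R) (C lam Mb T : R) (p s i0 : nat).
Hypotheses (C_gt0 : 0 < C) (lam_gt1 : 1 < lam) (lam_le : lam <= (2 ^ p)%:R)
  (GMb : GM_ineq b C lam) (b_le : forall k, `|b k| <= Mb) (T_gt0 : 0 < T)
  (partial_sum_le : forall m, `|partial_sum b m| <= T * (maxn m (2 ^ i0))%:R).

Let G := C * (2 ^ p)%:R * (2 ^ p)%:R * (2 * p + 1)%:R.
Hypothesis G_le : 4 * G <= (2 ^ s)%:R.

(* [Z] bounds the block masses relative to their size and weight; it is
   finite since [b] is bounded, and it absorbs itself: [Z <= 6 2^s + Z / 2]. *)
Let w := dyadic_weight T i0.
Let z t := dyadic_mass b t / (2 ^ t)%:R / w t.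
Let Z := sup (range z).

Let w_gt0 t : 0 < w t.
Proof. exact: lt_le_trans T_gt0 (dyadic_weight_ge _ _ (ltW T_gt0)). Qed.

Let z_ge0 t : 0 <= z t.
Proof. by rewrite !divr_ge0 ?dyadic_mass_ge0 ?ler0n // ltW. Qed.

Let z_le_Z t : z t <= Z.
Proof.
apply: sup_upper_bound; last by exists t.
split; first by exists (z 0%N), 0%N.
exists (Mb / T) => _ [k _ <-].
have mass_le : dyadic_mass b k <= (2 ^ k)%:R * Mb.
  apply: le_trans (ler_sum_nat (G := fun=> Mb) (fun j _ => b_le j)) _.
  by rewrite sumr_const_nat expnS mul2n -addnn addnK mulr_natl.
have Mb_ge0 : 0 <= Mb := le_trans (normr_ge0 _) (b_le 0).
rewrite /z ler_pdivrMr // ler_pdivrMr ?ltr0n ?expn_gt0 // (le_trans mass_le) //.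
rewrite [leLHS]mulrC ler_wpM2r ?ler0n // mulrAC ler_pdivlMr // ler_wpM2l //.
exact: dyadic_weight_ge (ltW T_gt0).
Qed.

Let mass_le_Z t : dyadic_mass b t <= (2 ^ t)%:R * (Z * w t).
Proof.
by rewrite mulrC -ler_pdivrMr ?ltr0n ?expn_gt0 // -ler_pdivrMr //; apply: z_le_Z.
Qed.

Let Z_ge0 : 0 <= Z := le_trans (z_ge0 0) (z_le_Z 0).

Let variation_le_Z j : dyadic_variation b j <= G * Z * w j.
Proof.
apply: le_trans (dyadic_variation_le_GM j C_gt0 lam_gt1 lam_le GMb) _.
set X := (2 ^ p)%:R * (2 ^ p)%:R * Z * w j.
have mass_le t : (j - p <= t < j + p + 1)%N -> dyadic_mass b t <= (2 ^ j)%:R * X.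
  move=> /andP[lo hi]; apply: le_trans (mass_le_Z t) _.
  have pow_le : ((2 ^ t)%:R : R) <= (2 ^ j)%:R * (2 ^ p)%:R.
    by rewrite -natrM -expnD ler_nat leq_exp2l //; lia.
  have w_le := dyadic_weight_le i0 (ltW T_gt0) lo.
  rewrite /X -/(w t) -/(w j) in w_le *.
  apply: le_trans (ler_wpM2r (mulr_ge0 Z_ge0 (ltW (w_gt0 t))) pow_le) _.
  have := ler_wpM2l (mulr_ge0 (mulr_ge0 (ler0n R (2 ^ j)) (ler0n R (2 ^ p))) Z_ge0) w_le.
  lra.
apply: le_trans (ler_wpM2l (divr_ge0 (ltW C_gt0) (ler0n _ _)) (ler_sum_nat mass_le)) _.
set N := (j + p + 1 - (j - p))%N.
have -> : C / (2 ^ j)%:R * \sum_(j - p <= i < j + p + 1) (2 ^ j)%:R * X = C * X * N%:R.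
  by rewrite sumr_const_nat -mulr_natr; field; rewrite pnatr_eq0 expn_eq0.
have N_le : (N%:R : R) <= (2 * p + 1)%:R by rewrite ler_nat /N; lia.
have : 0 <= C * X by rewrite /X !mulr_ge0 ?ler0n // ltW.
rewrite /G /X; nra.
Qed.

Let Z_le : Z <= 12 * (2 ^ s)%:R.
Proof.
set q : R := (2 ^ s)%:R.
have q_gt0 : 0 < q by rewrite ltr0n expn_gt0.
suff z_le t : z t <= 6 * q + Z / 2.
  have : Z <= 6 * q + Z / 2 by apply: ge_sup => [|_ [t _ <-]]; [exists (z 0%N), 0%N|].
  lra.
have Vsum : dyadic_variation b t + dyadic_variation b t.+1 <= 2 * G * Z * w t.
  have := variation_le_Z t; have := variation_le_Z t.+1.
  have := dyadic_weight_nonincr i0 (ltW T_gt0) (leqnSn t); rewrite -/(w t) -/(w t.+1).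
  have : 0 <= G * Z by rewrite mulr_ge0 // /G !mulr_ge0 ?ler0n // ltW.
  nra.
rewrite /z ler_pdivrMr // (le_trans (dyadic_mass_le (ltW T_gt0) partial_sum_le s t)) //.
rewrite -/q -[dyadic_weight T i0 t]/(w t) [leRHS]mulrDl lerD //.
rewrite ler_pdivrMr // (le_trans Vsum) //.
have Zw_ge0 : 0 <= Z * w t by rewrite mulr_ge0 // ltW.
have := ler_wpM2r Zw_ge0 G_le; rewrite -/q; lra.
Qed.

Lemma dyadic_variation_absorb : dyadic_variation b i0 <= G * (12 * (2 ^ s)%:R) * T.
Proof.
apply: le_trans (variation_le_Z i0) _.
have -> : w i0 = T := dyadic_weight_at T i0.
have G_ge0 : 0 <= G by rewrite /G !mulr_ge0 ?ler0n // ltW.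
by rewrite ler_wpM2r ?(ltW T_gt0) // ler_wpM2l.
Qed.

End Absorption.

Lemma GM_bounded_dyadic_variation_le (b : nat -> R) (C lam Mb : R) :
  0 < C -> 1 < lam -> GM_ineq b C lam -> (forall k, `|b k| <= Mb) ->
  exists2 K : R, 0 < K & forall (T : R) (i0 : nat), 0 <= T ->
    (forall m, `|partial_sum b m| <= T * (maxn m (2 ^ i0))%:R) ->
    dyadic_variation b i0 <= K * T.
Proof.
move=> C_gt0 lam_gt1 GMb b_le.
pose p := Num.truncn lam.
have lam_le : lam <= (2 ^ p)%:R.
  by apply: le_trans (ltW (truncnS_gt lam)) _; rewrite ler_nat ltn_expl.
pose G := C * (2 ^ p)%:R * (2 ^ p)%:R * (2 * p + 1)%:R.
pose s := Num.truncn (4 * G).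
have G_le : 4 * G <= (2 ^ s)%:R.
  by apply: le_trans (ltW (truncnS_gt _)) _; rewrite ler_nat ltn_expl.
exists (G * (12 * (2 ^ s)%:R)); first by rewrite !mulr_gt0 ?ltr0n ?expn_gt0 ?addn1.
move=> T i0 T_ge0 PT; have [T0|T_neq0] := eqVneq T 0; last first.
  by apply: dyadic_variation_absorb C_gt0 lam_gt1 lam_le GMb b_le _ PT G_le;
     rewrite lt_neqAle eq_sym T_neq0.
have P0 m : partial_sum b m = 0.
  by apply/normr0_eq0/eqP; rewrite eq_le normr_ge0 andbT -(mul0r (maxn m (2 ^ i0))%:R) -T0.
have b0 k : b k = 0 by rewrite partial_sumS !P0 subrr.
by rewrite T0 mulr0 /dyadic_variation big1 // => t _; rewrite /jump !b0 subrr normr0.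
Qed.

Section TwoSided.
Implicit Types (a : int -> R) (n k : nat).

Lemma psum_Posz a j : psum a (Posz j) = partial_sum (fun k => a (Posz k)) j.+1.
Proof. by rewrite /psum /partial_sum /= big_mkord. Qed.

Lemma ahat_ge0 a k : 0 <= ahat a k.
Proof. exact: bigmax_ge_id. Qed.

Lemma ahat_ge a k j : (2 ^ k <= j < 2 ^ k.+1)%N ->
  `|psum a (Posz j)| / (j%:R + 1) <= ahat a k.
Proof.
move=> kj; rewrite /ahat.
apply: le_trans (@le_bigmax_seq _ _ _ _ 0 j xpredT _ _ _) => //;
  last by rewrite mem_index_iota.
by rewrite le_max lexx.
Qed.

(* A bound [T] on the weighted [ahat a k] gives linear growth of the partial
   sums beyond [2 ^ n]: the weight [min 1 (2 ^ (k - n))] is compensated by the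
   size [2 ^ k] of the dyadic block containing the index. *)
Lemma partial_sum_le_ahat a n T : a 0 = 0 ->
  (forall k, Num.min 1 ((2 : R) ^ (Posz k - Posz n)) * ahat a k <= T) ->
  forall m, `|partial_sum (fun k => a (Posz k)) m| <= 2 * T * (maxn m (2 ^ n))%:R.
Proof.
move=> a0 HT.
have T_ge0 : 0 <= T.
  by apply: le_trans (HT 0%N); rewrite mulr_ge0 ?ahat_ge0 // le_min ler01 ltW // exprz_gt0.
have zero_le m : 0 <= 2 * T * (maxn m (2 ^ n))%:R by rewrite !mulr_ge0.
case=> [|[|j]]; first by rewrite /partial_sum big_ord0 normr0 zero_le.
  by rewrite /partial_sum big_ord1 a0 normr0 zero_le.
rewrite -psum_Posz.
pose k := trunc_log 2 j.+1.
have kj : (2 ^ k <= j.+1 < 2 ^ k.+1)%N by rewrite trunc_logP // trunc_log_ltn.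
have := HT k; have := ahat_ge a kj; set r : R := 2 ^ (Posz k - Posz n).
have r_gt0 : 0 < r by rewrite exprz_gt0.
have r2n : r * (2 ^ n)%:R = (2 ^ k)%:R by rewrite !natrX !exprnP /r -expfzDr ?subrK.
have j1_gt0 : (0 : R) < j.+1%:R + 1 by rewrite ltr_wpDl.
rewrite ler_pdivrMr // => Sa Ta.
have jk : (j.+2%:R : R) <= 2 * (2 ^ k)%:R by rewrite -natrM ler_nat -expnS; case/andP: kj.
have j_le : (j.+1%:R + 1 : R) <= 2 * (maxn j.+2 (2 ^ n))%:R * Num.min 1 r.
  have maxj : (j.+2%:R : R) <= (maxn j.+2 (2 ^ n))%:R by rewrite ler_nat leq_maxl.
  have maxn2 : ((2 ^ n)%:R : R) <= (maxn j.+2 (2 ^ n))%:R by rewrite ler_nat leq_maxr.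
  rewrite natr1; have [_|_] := leP 1 r; first lra.
  have := ler_wpM2l (ltW r_gt0) maxn2; lra.
have M_ge0 : (0 : R) <= 2 * (maxn j.+2 (2 ^ n))%:R by rewrite mulr_ge0.
have := ler_wpM2l (ahat_ge0 a k) j_le; have := ler_wpM2l M_ge0 Ta; lra.
Qed.

Lemma dyadic_var0 a : (forall k : int, k <= 0 -> a k = 0) ->
  dyadic_var a 0 = `|partial_sum (fun k => a (Posz k)) 2|.
Proof.
move=> a_le0; rewrite /dyadic_var /= big_nat1 /Dabs ltxx /=.
rewrite (a_le0 0) // (a_le0 (-1)) // /partial_sum big_ord_recl big_ord1 /=.
by rewrite (a_le0 0) // !sub0r oppr0 normr0 addr0 normrN add0r.
Qed.

Lemma dyadic_varS a n : (forall k : int, k <= 0 -> a k = 0) ->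
  dyadic_var a n.+1 <= dyadic_variation (fun k => a (Posz k)) n.
Proof.
move=> a_le0; rewrite /dyadic_var /dyadic_variation expnS mul2n doubleK.
apply: (@le_trans _ _ (\sum_(2 ^ n <= j < (2 ^ n).*2) jump (fun k => a (Posz k)) j)).
  apply: ler_sum_nat => j /andP[lo _].
  have j_gt0 : (0 < Posz j)%R by rewrite ltz_nat (leq_trans _ lo) ?expn_gt0.
  have -> : (j == 0%N) = false by apply/negbTE; rewrite -lt0n -ltz_nat.
  rewrite /Dabs j_gt0 oppr_gt0 ltNge (ltW j_gt0) /= oppr_lt0 j_gt0.
  rewrite (a_le0 (- Posz j)) ?oppr_le0 ?(ltW j_gt0) // (a_le0 (- Posz j - 1)); last by lia.
  by rewrite -PoszD addn1 subrr normr0 addr0.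
by apply: ler_sum_subrange => [t|t]; [apply: jump_ge0 | lia].
Qed.

Lemma GMbar_of_le a (C' : R) : 0 < C' ->
  (forall n T, 0 <= T ->
     (forall k, Num.min 1 ((2 : R) ^ (Posz k - Posz n)) * ahat a k <= T) ->
     dyadic_var a n <= C' * T) ->
  GMbar a.
Proof.
move=> C'_gt0 var_le; exists C'; split => // n.
set f := fun k : nat => _.
have f_ge0 k : (0 <= f k)%E.
  by rewrite lee_fin mulr_ge0 ?ahat_ge0 // le_min ler01 ltW // exprz_gt0.
have f_le k : (f k <= ereal_sup (range f))%E by apply: ereal_sup_ubound; exists k.
case: (ereal_sup (range f)) f_le => [T| |] f_le; last 2 first.
- by rewrite muleC gt0_mulye ?leey // lte_fin.
- by have := le_trans (f_ge0 0%N) (f_le 0%N).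
rewrite -EFinM lee_fin; apply: var_le => [|k]; last by rewrite -lee_fin f_le.
by rewrite -lee_fin (le_trans (f_ge0 0%N)).
Qed.

End TwoSided.
End Dyadic.

Lemma cvgn_abs_le (R : realType) (u : nat -> R) :
  cvgn u -> exists M : R, forall k, `|u k| <= M.
Proof.
move=> /cvg_seq_bounded [M [_ M_ub]]; exists (`|M| + 1) => k.
by apply: M_ub => //; rewrite (le_lt_trans (ler_norm _)) // ltrDl.
Qed.

Theorem mainTheorem12 (R : realType) (a : int -> R) :
  (forall k : int, (k <= 0)%R -> a k = 0) ->
  GM (fun k : nat => a (Posz k)) ->
  (fun k : nat => a (Posz k)) @ \oo --> (0 : R) ->
  GMbar a.
Proof.
move=> a_le0 [C [lam [C_gt0 [lam_gt1 GMa]]]] a_cvg.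
have [Mb a_le] := cvgn_abs_le (cvgP 0 a_cvg).
have [K K_gt0 var_le] := GM_bounded_dyadic_variation_le C_gt0 lam_gt1 GMa a_le.
apply: (@GMbar_of_le _ a (4 * Num.max 1 K)) => [|n T T_ge0 HT].
  by rewrite mulr_gt0 // lt_max ltr01.
have partial_sum_le := partial_sum_le_ahat (a_le0 0 (lexx _)) HT.
case: n HT partial_sum_le => [|n] _ partial_sum_le.
  rewrite dyadic_var0 //; apply: le_trans (partial_sum_le 2%N) _.
  have T_le : T <= Num.max 1 K * T by rewrite ler_peMl // le_max lexx.
  rewrite expn0 (maxn_idPl _) //; lra.
apply: le_trans (dyadic_varS n a_le0) _.
have KT : K * T <= Num.max 1 K * T by rewrite ler_wpM2r // le_max lexx orbT.
apply: le_trans (var_le (4 * T) n _ _) _; [lra| |lra].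
move=> m; apply: le_trans (partial_sum_le m) _.
have max_le : ((maxn m (2 ^ n.+1))%:R : R) <= 2 * (maxn m (2 ^ n))%:R.
  by rewrite -natrM ler_nat expnS; lia.
have := ler_wpM2l (mulr_ge0 (ler0n R 2) T_ge0) max_le; lra.
Qed.
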